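(* For all integers $n \ge 3$ and $0 \le m \le n-1$ we have $\widehat{C}_{n,m} > 1$.
   Context: $\mathcal{K}_k^n = \{\prod_{s=1}^n [\frac{i_s-1}{k}, \frac{i_s}{k}] : i_s \in \{1,\dots,k\}\}$ (cubes dividing $I^n=[0,1]^n$); $\dim$ is topological dimension; a set $S\subset I^n$ connects some opposite faces of $I^n$ if it is connected and meets both $\{z_i=0\}$ and $\{z_i=1\}$ for some $i$; $\mathbb{Z}^{n-1}$ has the $\ell^\infty$ norm; $P\subset\mathbb{Z}^{n-1}$ is $1$-connected if any two points are joined by a finite chain in $P$ with consecutive $\ell^\infty$-distances $\le 1$. $\widehat{C}_{n,m}$ is the least constant $C>0$ such that: for every $k\in\mathbb{N}$ and every $F\colon\mathcal{K}_k^n\to\mathbb{Z}^{n-1}$ with $\|F(K_1)-F(K_2)\|_\infty\le 1$ whenever $\dim(K_1\cap K_2)\ge m$, there exist a $1$-connected $P\subset\mathbb{Z}^{n-1}$ with $|P|\le C$ and $\mathcal{S}\subset F^{-1}[P]$ with $\bigcup\mathcal{S}$ connecting some opposite faces of $I^n$. *)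

From HB Require Import structures.
From mathcomp Require Import all_boot all_order all_algebra.
From mathcomp Require Import all_classical all_reals all_analysis.
Set Implicit Arguments. Unset Strict Implicit. Unset Printing Implicit Defensive.
Import Order.TTheory GRing.Theory Num.Theory.
Import numFieldNormedType.Exports.
Local Open Scope ring_scope.
Local Open Scope classical_set_scope.

(* A cube of K_k^n is indexed by i : {ffun 'I_n -> 'I_k}; the paper's index
   i_s in {1,...,k} is (i s) + 1, so the cube is prod_s [i s / k, (i s + 1)/k]. *)
Definition cube (R : realType) (n k : nat) (i : {ffun 'I_n -> 'I_k})
  : set 'rV[R]_n :=
  [set x | forall s : 'I_n,
     ((i s)%:R / k%:R <= x ord0 s) /\ (x ord0 s <= (i s).+1%:R / k%:R)].

(* Topological dimension of the intersection of two cubes of K_k^n: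
   the intersection is empty (dimension -1) unless all indices differ by at
   most 1, in which case it is a product of intervals, nondegenerate exactly
   in the coordinates where the indices agree. *)
Definition cube_inter_dim (n k : nat) (i j : {ffun 'I_n -> 'I_k}) : int :=
  if [forall s, (`|(i s)%:Z - (j s)%:Z| <= 1)%R]
  then (#|[set s | i s == j s]|)%:Z else (-1)%R.

Definition linf_adj (d : nat) : rel {ffun 'I_d -> int} :=
  fun p q => [forall j, (`|p j - q j| <= 1)%R].

Definition one_connected (d : nat) (P : seq {ffun 'I_d -> int}) : Prop :=
  forall p q, p \in P -> q \in P ->
    exists s : seq {ffun 'I_d -> int},
      all (fun r => r \in P) s /\ path (@linf_adj d) p s /\ last p s = q.

Definition connects_opposite_faces (R : realType) (n : nat)
  (A : set 'rV[R]_n) : Prop :=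
  connected A /\ exists s : 'I_n,
    (exists x, A x /\ x ord0 s = 0) /\ (exists x, A x /\ x ord0 s = 1).

Definition Chat_admissible (R : realType) (n m : nat) (C : R) : Prop :=
  forall k : nat, (0 < k)%N ->
  forall F : {ffun 'I_n -> 'I_k} -> {ffun 'I_n.-1 -> int},
    (forall K1 K2, (m%:Z <= cube_inter_dim K1 K2)%R ->
       linf_adj (F K1) (F K2)) ->
    exists P : seq {ffun 'I_n.-1 -> int},
      [/\ uniq P, (size P)%:R <= C, one_connected P &
      exists S : {set {ffun 'I_n -> 'I_k}},
        (forall K, K \in S -> F K \in P) /\
        connects_opposite_faces
          [set x : 'rV[R]_n | exists2 K, K \in S & @cube R n k K x]].

From HB Require Import structures.
From mathcomp Require Import all_boot all_order all_algebra.
From mathcomp Require Import all_classical all_reals all_analysis.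
Import Order.TTheory GRing.Theory Num.Theory.
Import numFieldNormedType.Exports.
Local Open Scope ring_scope.
Local Open Scope classical_set_scope.

(* Take k = 3. Four colours (two bits) are assigned to the 27 cells of the
   3 x 3 x 3 grid spanned by the first three coordinates so that no
   connected monochromatic cluster of touching cells meets two opposite faces.
   Let F K record the colour of the first three indices of K together with
   all its remaining indices: F moves by at most 1 between touching cubes,
   whatever m is. If C <= 1, then |P| <= 1 and the cubes of S form a single
   fibre of F. Touching cubes of one fibre lie in the same colour cluster, so
   by connectedness all of S lies in one cluster with fixed indices beyond the
   third, and cannot join opposite faces. *)

Definition cube_union (R : realType) (n k : nat)
  (S : {set {ffun 'I_n -> 'I_k}}) : set 'rV[R]_n :=
  [set x | exists2 K, K \in S & cube K x].
Arguments cube_union R {n k} S.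

Section Cubes.
Context {R : realType} {n k : nat}.
Implicit Types (K : {ffun 'I_n -> 'I_k}) (S : {set {ffun 'I_n -> 'I_k}})
  (x : 'rV[R]_n).

Lemma cube_closed K : closed (@cube R n k K).
Proof.
rewrite (_ : cube K = \bigcap_(s in [set: 'I_n])
   ((fun x : 'rV[R]_n => x ord0 s) @^-1` `[(K s)%:R / k%:R, (K s).+1%:R / k%:R])).
  apply: closed_bigI => s _; apply: preimage_closed; last exact: interval_closed.
  by move=> x _; apply: coord_continuous.
rewrite predeqE => x; split => [H s _|H s].
  by rewrite /preimage /= in_itv; apply/andP; apply: H.
by have := H s I; rewrite /preimage /= in_itv => /andP.
Qed.

Lemma cube_union_closed S : closed (cube_union R S).
Proof.
rewrite (_ : cube_union R S = \bigcup_(K in [set K | K \in S]) cube K) //.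
by apply: closed_bigcup => [|K _]; [exact: finite_finset|exact: cube_closed].
Qed.

Hypothesis k_gt0 : (0 < k)%N.

Lemma ler_natdiv (a b : nat) : (a%:R / k%:R <= b%:R / k%:R :> R) = (a <= b)%N.
Proof. by rewrite ler_pM2r ?invr_gt0 ?ltr0n // ler_nat. Qed.

Lemma cube_index_le K K' x s : cube K x -> cube K' x -> (K s <= (K' s).+1)%N.
Proof.
move=> /(_ s) [Kx _] /(_ s) [_ K'x].
by rewrite -ler_natdiv; apply: le_trans K'x.
Qed.

Lemma cube_face0 K x s : cube K x -> x ord0 s = 0 -> K s = 0%N :> nat.
Proof.
move=> /(_ s) [Kx _] x0; apply/eqP; rewrite -leqn0 -ler_natdiv.
by rewrite mul0r -x0.
Qed.

Lemma cube_face1 K x s : cube K x -> x ord0 s = 1 -> (K s).+1 = k.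
Proof.
move=> /(_ s) [_ +] x1; rewrite x1 => Kx; apply/eqP; rewrite eqn_leq ltn_ord /= -ler_natdiv.
by rewrite divff ?pnatr_eq0 -?lt0n.
Qed.

Lemma connected_cube_union_label {T : eqType} (lab : {ffun 'I_n -> 'I_k} -> T)
    S K0 x0 :
  connected (cube_union R S) ->
  {in S &, forall K K' x, cube K x -> cube K' x -> lab K = lab K'} ->
  K0 \in S -> cube K0 x0 ->
  cube_union R [set K in S | lab K == lab K0] = cube_union R S.
Proof.
(* The cubes of other labels form a closed set missing the cubes labelled
   [lab K0], which are therefore clopen in the union. *)
move=> connS labS K0S K0x0.
set ST := [set K in S | _]; set SD := S :\: ST.
have STS : {subset ST <= S} by move=> K; rewrite inE => /andP[].
apply: connS.
- by exists x0, K0; rewrite // inE K0S eqxx.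
- exists (~` cube_union R SD); first exact/closed_openC/cube_union_closed.
  rewrite predeqE => x; split=> [[K KT Kx]|[[K KS Kx] nSDx]].
    split; first by exists K => //; exact: STS.
    move=> [K' K'D K'x]; move: K'D KT; rewrite !inE => /andP[K'nT K'S] /andP[KS /eqP lK].
    by move: K'nT; rewrite K'S -lK (labS _ _ K'S KS _ K'x Kx) ?eqxx.
  exists K => //; apply/negPn/negP => KnT; apply: nSDx.
  by exists K; rewrite // inE KnT.
- exists (cube_union R ST); first exact: cube_union_closed.
  rewrite predeqE => x; split=> [STx|[]//]; split=> //.
  by case: STx => K KT Kx; exists K => //; exact: STS.
Qed.
End Cubes.

Section Grid.
Local Open Scope nat_scope.

Fixpoint grid (d : nat) : seq (seq nat) :=
  if d is d'.+1 then [seq a :: t | a <- iota 0 3, t <- grid d'] else [:: [::]].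

Lemma mem_grid d t : (t \in grid d) = (size t == d) && all (fun a => a < 3) t.
Proof.
elim: d t => [|d IHd] [|a t] //; first by apply/negbTE/negP => /allpairsP[[b u] [_ _]].
apply/allpairsP/idP => [[[b u] [+ + [-> ->]]]|/andP[sz /andP[ha ht]]].
  by rewrite mem_iota IHd /= eqSS => -> /andP[-> ->].
exists (a, t); split=> //; first by rewrite mem_iota.
by rewrite IHd -eqSS sz.
Qed.

(* Cell [:: a; b; c] has index 9a + 3b + c in [grid 3]; its colour is read
   off [colour0_table] and [colour1_table], and [component_table] numbers the
   clusters of touching cells of each colour. *)
Definition colour0_table :=
  [:: 0; 0; 0; 0; 0; 0; 0; 1; 1; 0; 0; 1; 0; 0; 1; 0; 1; 1; 0; 0; 1; 1; 1; 1; 1; 1; 0].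
Definition colour1_table :=
  [:: 0; 0; 1; 0; 0; 1; 1; 0; 0; 0; 0; 0; 0; 0; 1; 1; 1; 0; 1; 1; 0; 0; 1; 1; 0; 1; 1].
Definition component_table :=
  [:: 0; 0; 1; 0; 0; 1; 2; 3; 3; 0; 0; 4; 0; 0; 5; 2; 5; 3; 6; 6; 4; 7; 5; 5; 7; 5; 8].

Definition colour (t : seq nat) : nat * nat :=
  (nth 0 colour0_table (index t (grid 3)), nth 0 colour1_table (index t (grid 3))).
Arguments colour t : simpl never.
Definition component (t : seq nat) : nat := nth 0 component_table (index t (grid 3)).

Definition nat_adj (a b : nat) : bool := (a <= b.+1) && (b <= a.+1).

Lemma component_adj : {in grid 3 &, forall t t',
  (forall j, nat_adj (nth 0 t j) (nth 0 t' j)) ->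
  colour t = colour t' -> component t = component t'}.
Proof.
have /allP check : all (fun t => all (fun t' =>
  all (fun j => nat_adj (nth 0 t j) (nth 0 t' j)) (iota 0 3) && (colour t == colour t')
  ==> (component t == component t')) (grid 3)) (grid 3) by [].
move=> t t' /check/allP/[apply]/implyP pair_check adj eq_col.
by apply/eqP/pair_check; rewrite eq_col eqxx andbT; apply/allP => j _.
Qed.

Lemma component_not_spanning : {in grid 3 &, forall t t',
  colour t = colour t' -> component t = component t' ->
  forall j, nth 0 t j = 0 -> nth 0 t' j = 2 -> False}.
Proof.
have /allP check : all (fun t => all (fun t' =>
  (colour t == colour t') && (component t == component t') ==>
  all (fun j => (nth 0 t j == 0) ==> (nth 0 t' j != 2)) (iota 0 3)) (grid 3)) (grid 3)
  by [].
move=> t t' tg t'g eq_col eq_comp j t0 t'2.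
have /andP[/eqP sz' _] : (size t' == 3) && all (fun a => a < 3) t' by rewrite -mem_grid.
have j3 : j < 3.
  by rewrite -sz' ltnNge; apply/negP => /(nth_default 0) t'0; rewrite t'0 in t'2.
move: (check t tg) => /allP/(_ t' t'g); rewrite eq_col eq_comp !eqxx.
by move=> /allP/(_ j); rewrite mem_iota j3 t0 t'2 => /(_ isT).
Qed.

Lemma nth_bits (s : seq nat) i : all (fun b => b <= 1) s -> nth 0 s i <= 1.
Proof.
move=> /allP s_bits; have [/(mem_nth 0)/s_bits //|/(nth_default 0)->//] := ltnP i (size s).
Qed.

Lemma colour_bits t : ((colour t).1 <= 1) && ((colour t).2 <= 1).
Proof. by rewrite !nth_bits. Qed.

End Grid.

Section ColourMap.
Context {n' : nat}.
Local Notation n := n'.+3.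
Implicit Types (K : {ffun 'I_n -> 'I_3}) (s : 'I_n).

Definition head3 K : seq nat := [seq (K (inord j) : nat) | j <- iota 0 3].

Lemma head3_grid K : head3 K \in grid 3.
Proof.
by rewrite mem_grid size_map size_iota eqxx all_map; apply/allP => j _ /=.
Qed.

Lemma nth_head3 K s : (s < 3)%N -> nth 0%N (head3 K) s = K s.
Proof. by move=> s3; rewrite (nth_map 0%N) ?size_iota // nth_iota // add0n inord_val. Qed.

Definition colour_map K : {ffun 'I_n'.+2 -> int} :=
  [ffun j : 'I_n'.+2 => if j == 0%N :> nat then ((colour (head3 K)).1)%:Z
     else if j == 1%N :> nat then ((colour (head3 K)).2)%:Z
     else (K (inord j.+1) : nat)%:Z].

Definition cell_component K : nat := component (head3 K).

Lemma colour_map_eq K K' : colour_map K = colour_map K' ->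
  colour (head3 K) = colour (head3 K') /\ forall s, (3 <= s)%N -> K s = K' s.
Proof.
move=> e; have coord j := congr1 (fun f : {ffun 'I_n'.+2 -> int} => f j) e.
split.
  have := coord (inord 0); have := coord (inord 1); rewrite !ffunE !inordK //.
  by case: (colour (head3 K)) (colour (head3 K')) => [a b] [a' b'] /= [->] [->].
move=> s s3; have := coord (inord s.-1).
have s1 : (s.-1 < n'.+2)%N by rewrite -ltnS prednK ?ltn_ord // (leq_trans _ s3).
rewrite !ffunE inordK // prednK ?(leq_trans _ s3) // inord_val.
have -> : (s.-1 == 0%N) = false by case: (nat_of_ord s) s3 => [|[|[|]]].
have -> : (s.-1 == 1%N) = false by case: (nat_of_ord s) s3 => [|[|[|]]].
by move=> [] /val_inj.
Qed.

Lemma colour_map_admissible (m : nat) K1 K2 :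
  (m%:Z <= cube_inter_dim K1 K2)%R -> linf_adj (colour_map K1) (colour_map K2).
Proof.
rewrite /cube_inter_dim; case: ifP => [/forallP K12 _|_]; last first.
  by move=> /le_lt_trans/(_ (ltrN10 int)).
have bits_adj (a b : nat) : (a <= 1)%N -> (b <= 1)%N -> (`|a%:Z - b%:Z| <= 1)%R.
  by case: a => [|[|]] // _; case: b => [|[|]].
have /andP[K1c0 K1c1] := colour_bits (head3 K1).
have /andP[K2c0 K2c1] := colour_bits (head3 K2).
apply/forallP => j; rewrite !ffunE.
by case: ifP => _; [|case: ifP => _]; [apply: bits_adj..|apply: K12].
Qed.

Lemma colour_map_fibre_component {R : realType} K K' (x : 'rV[R]_n) :
  cube K x -> cube K' x -> colour_map K = colour_map K' ->
  cell_component K = cell_component K'.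
Proof.
move=> Kx K'x /colour_map_eq[col _].
apply: (component_adj _ _ (head3_grid K) (head3_grid K') _ col) => j.
have [j3|j3] := ltnP j 3; last by rewrite !nth_default ?size_map ?size_iota.
by rewrite !(nth_map 0%N) ?size_iota //; apply/andP; split; exact: cube_index_le.
Qed.

Lemma colour_map_fibre_not_spanning K K' s :
  colour_map K = colour_map K' -> cell_component K = cell_component K' ->
  K s = 0%N :> nat -> K' s = 2%N :> nat -> False.
Proof.
move=> /colour_map_eq[col tail] comp Ks0 K's2.
have [s3|s3] := ltnP s 3; last by move: Ks0 K's2; rewrite tail // => ->.
by apply: (component_not_spanning _ _ (head3_grid K) (head3_grid K') col comp s);
  rewrite nth_head3.
Qed.
End ColourMap.

Theorem proposition5p3 (R : realType) (n m : nat) :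
  (3 <= n)%N -> (m <= n - 1)%N ->
  forall C : R, 0 < C -> Chat_admissible n m C -> 1 < C.
Proof.
move=> n3 _ C _ admissible; rewrite ltNge; apply/negP => C_le1.
case: n n3 admissible => [|[|[|n']]] // _ admissible.
have [P [_ sizeP _ [S [SP [connS [s [[x0 [[K0 K0S K0x0] x0s]] [x1 [x1S x1s]]]]]]]]]
  := admissible 3%N isT _ (@colour_map_admissible n' m).
have fibre : {in S, forall K, colour_map K = colour_map K0}.
  have sizeP1 : (size P <= 1)%N by rewrite -(ler_nat R) (le_trans sizeP).
  move=> K KS; have := SP K KS; have := SP K0 K0S.
  by case: P {sizeP SP} sizeP1 => [|p [|]] //= _; rewrite !inE => /eqP-> /eqP->.
have labS : {in S &, forall K K' (x : 'rV[R]_n'.+3),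
    cube K x -> cube K' x -> cell_component K = cell_component K'}.
  move=> K K' KS K'S x Kx K'x; apply: colour_map_fibre_component Kx K'x _.
  by rewrite !fibre.
have [K1 /setIdP[K1S /eqP K1comp] K1x1] :
    cube_union R [set K in S | cell_component K == cell_component K0] x1.
  by rewrite (connected_cube_union_label _ _ _ _ connS labS K0S K0x0).
apply: (colour_map_fibre_not_spanning K0 K1 s (esym (fibre K1 K1S)) (esym K1comp)).
  exact: cube_face0 K0x0 x0s.
by apply/succn_inj; apply: cube_face1 K1x1 x1s.
Qed.
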